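(* Let $F$ be an algebraically closed field of characteristic different from $2$ and $3$, and let $K_{10}=F\cdot 1\oplus(K_3\otimes K_3)$ be the Kac Jordan superalgebra in the realization described in the context. Let $\varphi\colon K_{10}\to K_{10}$ be the automorphism $\varphi(\lambda 1+a\otimes b)=\lambda 1+(-1)^{\bar a\bar b}\,b\otimes a$ (for $\lambda\in F$ and homogeneous $a,b\in K_3$, extended linearly). Then the maximal subalgebras of $K_{10}$ are, up to conjugation by automorphisms of $K_{10}$, the following: (i) $(K_{10})_{\bar 0}$; (ii) the subalgebra of elements fixed by $\varphi$; (iii) the subalgebra $F\cdot 1\oplus(M\otimes K_3)$, where $M=Fe+Fx$ (a maximal subalgebra of $K_3$); (iv) the subalgebra $F\cdot 1+F(e\otimes e)+(x\otimes K_3)+(K_3\otimes y)$.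
   Context: The Kaplansky superalgebra $K_3$ has even part $Fe$ and odd part $Fx+Fy$, with products $e^2=e$, $ex=xe=\tfrac12x$, $ey=ye=\tfrac12y$, $xy=e$, $yx=-e$, $x^2=y^2=0$. It carries the supersymmetric bilinear form with $(e|e)=\tfrac12$, $(x|y)=1$, $(y|x)=-1$, $(x|x)=(y|y)=0$, and even and odd parts orthogonal. $K_{10}=F\cdot1\oplus(K_3\otimes K_3)$ is the superalgebra in which $1$ is an even identity element, $a\otimes b$ (for homogeneous $a,b\in K_3$) has parity $\bar a+\bar b$, and $(a\otimes b)(c\otimes d)=(-1)^{\bar b\bar c}\bigl(ac\otimes bd-\tfrac34(a|c)(b|d)1\bigr)$; this is (isomorphic to) the $10$-dimensional Kac Jordan superalgebra. Subalgebras are graded subalgebras; maximal means proper and maximal under inclusion; automorphisms are grading-preserving. *)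

From HB Require Import structures.
From mathcomp Require Import all_boot all_order all_algebra.
Set Implicit Arguments. Unset Strict Implicit. Unset Printing Implicit Defensive.
Import GRing.Theory.
Local Open Scope ring_scope.

(* ---------- The Kaplansky superalgebra K_3 via structure constants ----------
   Basis of K_3 indexed by 'I_3 :  0 = e (even),  1 = x (odd),  2 = y (odd). *)

Section K10.
Variable F : fieldType.

Definition p3 (i : 'I_3) : bool := (nat_of_ord i != 0%N).

(* m3 i j k = coefficient of basis_k in basis_i * basis_j (product of K_3):
   e^2=e, ex=xe=x/2, ey=ye=y/2, xy=e, yx=-e, x^2=y^2=0 *)
Definition m3 (i j k : 'I_3) : F :=
  match nat_of_ord i, nat_of_ord j, nat_of_ord k with
  | O, O, O => 1
  | O, S O, S O => 2%:R^-1
  | S O, O, S O => 2%:R^-1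
  | O, S (S O), S (S O) => 2%:R^-1
  | S (S O), O, S (S O) => 2%:R^-1
  | S O, S (S O), O => 1
  | S (S O), S O, O => -1
  | _, _, _ => 0
  end.

(* the supersymmetric bilinear form on K_3:
   (e|e)=1/2, (x|y)=1, (y|x)=-1, all other pairs of basis elements 0 *)
Definition f3 (i j : 'I_3) : F :=
  match nat_of_ord i, nat_of_ord j with
  | O, O => 2%:R^-1
  | S O, S (S O) => 1
  | S (S O), S O => -1
  | _, _ => 0
  end.

Definition sgn (b : bool) : F := if b then -1 else 1.

(* K_10 = F 1 (+) (K_3 (x) K_3):  an element (l, A) stands for
   l * 1 + \sum_{i,j} A i j (basis_i (x) basis_j). *)
Definition K10 : Type := (F * 'M[F]_3)%type.

Definition k10zero : K10 := (0, 0).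
Definition k10add (u v : K10) : K10 := (u.1 + v.1, u.2 + v.2).
Definition k10scale (c : F) (u : K10) : K10 := (c * u.1, c *: u.2).

(* bilinear extension of: 1 is the identity and
   (a(x)b)(c(x)d) = (-1)^{|b||c|} (ac (x) bd - 3/4 (a|c)(b|d) 1) *)
Definition k10mul (u v : K10) : K10 :=
  let A := u.2 in let B := v.2 in
  (u.1 * v.1 - (3%:R / 4%:R) *
     (\sum_(i < 3) \sum_(j < 3) \sum_(k < 3) \sum_(l < 3)
        sgn (p3 j && p3 k) * A i j * B k l * f3 i k * f3 j l),
   u.1 *: B + v.1 *: A +
   \matrix_(r < 3, s < 3)
     (\sum_(i < 3) \sum_(j < 3) \sum_(k < 3) \sum_(l < 3)
        sgn (p3 j && p3 k) * A i j * B k l * m3 i k r * m3 j l s)).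

Definition k10even (u : K10) : K10 :=
  (u.1, \matrix_(i < 3, j < 3) (if p3 i (+) p3 j then 0 else u.2 i j)).

Definition is_even (u : K10) : Prop := u = k10even u.
Definition is_odd (u : K10) : Prop := k10even u = k10zero.

Definition kset := K10 -> Prop.

Record is_subalgebra (S : kset) : Prop := {
  sub0 : S k10zero;
  subD : forall u v, S u -> S v -> S (k10add u v);
  subZ : forall c u, S u -> S (k10scale c u);
  subGr : forall u, S u -> S (k10even u);
  subM : forall u v, S u -> S v -> S (k10mul u v) }.

Definition is_maximal_subalgebra (S : kset) : Prop :=
  [/\ is_subalgebra S,
      exists u, ~ S u &
      forall T : kset, is_subalgebra T -> (forall u, S u -> T u) ->
        (forall u, T u -> S u) \/ (forall u, T u)].

Record is_automorphism (g : K10 -> K10) : Prop := {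
  autD : forall u v, g (k10add u v) = k10add (g u) (g v);
  autZ : forall c u, g (k10scale c u) = k10scale c (g u);
  autBij : bijective g;
  autEven : forall u, is_even u -> is_even (g u);
  autOdd : forall u, is_odd u -> is_odd (g u);
  autM : forall u v, g (k10mul u v) = k10mul (g u) (g v) }.

Definition aut_image (g : K10 -> K10) (S : kset) : kset :=
  fun v => exists2 u, S u & v = g u.

Definition same_set (S T : kset) : Prop := forall u, S u <-> T u.

Definition k10phi (u : K10) : K10 :=
  (u.1, \matrix_(i < 3, j < 3) (sgn (p3 i && p3 j) * u.2 j i)).

Definition sub_i : kset := fun u => is_even u.
Definition sub_ii : kset := fun u => k10phi u = u.
(* (iii) F1 (+) (M (x) K_3), M = Fe + Fx : no y (x) _ components *)
Definition sub_iii : kset := fun u => forall j : 'I_3, u.2 2%:R j = 0.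
(* (iv) F1 + F(e(x)e) + (x (x) K_3) + (K_3 (x) y): the components on
   e(x)x, y(x)e, y(x)x vanish *)
Definition sub_iv : kset := fun u =>
  [/\ u.2 0 1%:R = 0, u.2 2%:R 0 = 0 & u.2 2%:R 1%:R = 0].

Definition listed (k : 'I_4) : kset :=
  match nat_of_ord k with
  | O => sub_i | S O => sub_ii | S (S O) => sub_iii | _ => sub_iv end.

End K10.
Arguments listed : clear implicits.

From mathcomp Require Import all_boot all_order all_algebra.
From mathcomp Require Import ring.
From Stdlib Require Import Classical.
Set Implicit Arguments. Unset Strict Implicit. Unset Printing Implicit Defensive.
Import GRing.Theory.
Local Open Scope ring_scope.

(* Write K10 = F1 + F(e(x)e) + (e(x)V + V(x)e) + V(x)V with V = Fx + Fy.  The product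
   only involves the symplectic form of V, so SL(V) x SL(V), acting on the two tensor
   factors, acts by automorphisms, and so does the twisted swap phi.  Products of odd
   elements span the even part, hence a subalgebra containing e(x)V and V(x)e is all of
   K10.  A proper subalgebra S is sorted by its odd part: either S is even (i); or S
   contains e(x)V (iii); or S meets e(x)V in a line, which SL(V) moves to e(x)y, and
   then S lies in (iv); or S meets neither e(x)V nor V(x)e, so its odd part is the graph
   of a map e(x)V -> V(x)e, and normalizing that map puts S in (ii) or (iv); the cases
   with e(x)V and V(x)e exchanged follow by phi.  Conversely, any element outside a
   listed subalgebra generates K10 together with it. *)

Section Coordinates.
Variable F : fieldType.

(* [Coord l m a1 a2 b1 b2 t11 t12 t21 t22] stands for l 1 + m e(x)e
   + e(x)(a1 x + a2 y) + (b1 x + b2 y)(x)e + t11 x(x)x + t12 x(x)y + t21 y(x)x + t22 y(x)y. *)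
Record coords := Coord { c1 : F; cee : F; cex : F; cey : F; cxe : F; cye : F;
  cxx : F; cxy : F; cyx : F; cyy : F }.

Lemma coords_ext r s : c1 r = c1 s -> cee r = cee s -> cex r = cex s ->
  cey r = cey s -> cxe r = cxe s -> cye r = cye s -> cxx r = cxx s ->
  cxy r = cxy s -> cyx r = cyx s -> cyy r = cyy s -> r = s.
Proof. by case: r; case: s => /= *; subst. Qed.

Definition coords_entry (r : coords) (i j : 'I_3) : F :=
  match nat_of_ord i, nat_of_ord j with
  | O, O => cee r | O, S O => cex r | O, _ => cey r
  | S O, O => cxe r | S O, S O => cxx r | S O, _ => cxy r
  | _, O => cye r | _, S O => cyx r | _, _ => cyy r end.

Definition of_coords (r : coords) : K10 F :=
  (c1 r, \matrix_(i < 3, j < 3) coords_entry r i j).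

Definition ie : 'I_3 := Ordinal (isT : (0 < 3)%N).
Definition ix : 'I_3 := Ordinal (isT : (1 < 3)%N).
Definition iy : 'I_3 := Ordinal (isT : (2 < 3)%N).

Definition to_coords (u : K10 F) : coords :=
  Coord u.1 (u.2 ie ie) (u.2 ie ix) (u.2 ie iy) (u.2 ix ie) (u.2 iy ie)
        (u.2 ix ix) (u.2 ix iy) (u.2 iy ix) (u.2 iy iy).

Lemma to_coordsK : cancel to_coords of_coords.
Proof.
case=> l A; rewrite /of_coords /=; congr pair; apply/matrixP => i j; rewrite mxE.
by case: i => [[|[|[|i]]] Hi] //; case: j => [[|[|[|j]]] Hj] //=;
  congr (A _ _); apply: val_inj.
Qed.

Lemma of_coordsK : cancel of_coords to_coords.
Proof. by case=> *; rewrite /to_coords /of_coords /= !mxE. Qed.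

Lemma of_coords_inj : injective of_coords.
Proof. exact: can_inj of_coordsK. Qed.

Lemma sum_ord3 (G : 'I_3 -> F) : \sum_(i < 3) G i = G ie + G ix + G iy.
Proof.
rewrite !big_ord_recr big_ord0 /= add0r.
by congr (G _ + G _ + G _); apply: val_inj.
Qed.

Definition czero : coords := Coord 0 0 0 0 0 0 0 0 0 0.
Definition cadd (r s : coords) : coords :=
  Coord (c1 r + c1 s) (cee r + cee s) (cex r + cex s) (cey r + cey s)
    (cxe r + cxe s) (cye r + cye s) (cxx r + cxx s) (cxy r + cxy s)
    (cyx r + cyx s) (cyy r + cyy s).
Definition cscale (c : F) (r : coords) : coords :=
  Coord (c * c1 r) (c * cee r) (c * cex r) (c * cey r) (c * cxe r) (c * cye r)
    (c * cxx r) (c * cxy r) (c * cyx r) (c * cyy r).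
Definition ceven (r : coords) : coords :=
  Coord (c1 r) (cee r) 0 0 0 0 (cxx r) (cxy r) (cyx r) (cyy r).
Definition cphi (r : coords) : coords :=
  Coord (c1 r) (cee r) (cxe r) (cye r) (cex r) (cey r)
    (- cxx r) (- cyx r) (- cxy r) (- cyy r).

Ltac mx3_ext := apply/matrixP; case=> [[|[|[|?]]] ?]; case=> [[|[|[|?]]] ?];
  rewrite ?mxE //=.

Lemma k10zero_coords : k10zero F = of_coords czero.
Proof. by congr pair; mx3_ext. Qed.

Lemma k10add_coords r s : k10add (of_coords r) (of_coords s) = of_coords (cadd r s).
Proof. by congr pair; mx3_ext. Qed.

Lemma k10scale_coords c r : k10scale c (of_coords r) = of_coords (cscale c r).
Proof. by congr pair; mx3_ext. Qed.

Lemma k10even_coords r : k10even (of_coords r) = of_coords (ceven r).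
Proof. by congr pair; mx3_ext. Qed.

Lemma k10phi_coords r : k10phi (of_coords r) = of_coords (cphi r).
Proof. by congr pair; mx3_ext; rewrite /sgn /= ?mul1r ?mulN1r. Qed.

Definition half : F := 2%:R^-1.
Definition symp (p1 p2 q1 q2 : F) : F := p1 * q2 - p2 * q1.

(* The product of K10 with the symplectic forms of the left and right factor V scaled by
   [d1] and [d2].  The twist turns the SL(V) x SL(V)-equivariance of [cmul := cmul_tw 1 1]
   into a polynomial identity over GL(V) x GL(V), see [cmul_cact]. *)
Definition cmul_tw (d1 d2 : F) (r s : coords) : coords :=
  let be := d2 * symp (cex r) (cey r) (cex s) (cey s)
            + d1 * symp (cxe r) (cye r) (cxe s) (cye s) in
  let I := d1 * d2 * (cxx r * cyy s + cyy r * cxx s - cxy r * cyx s - cyx r * cxy s) in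
  Coord
    (c1 r * c1 s - 3%:R / 16%:R * cee r * cee s - 3%:R / 8%:R * be + 3%:R / 4%:R * I)
    (c1 r * cee s + cee r * c1 s + cee r * cee s + be - I)
    (c1 r * cex s + c1 s * cex r + half * cee r * cex s + half * cee s * cex r
      - d1 * half * (cye s * cxx r - cxe s * cyx r)
      - d1 * half * (cye r * cxx s - cxe r * cyx s))
    (c1 r * cey s + c1 s * cey r + half * cee r * cey s + half * cee s * cey r
      - d1 * half * (cye s * cxy r - cxe s * cyy r)
      - d1 * half * (cye r * cxy s - cxe r * cyy s))
    (c1 r * cxe s + c1 s * cxe r + half * cee r * cxe s + half * cee s * cxe r
      + d2 * half * (cey s * cxx r - cex s * cxy r)
      + d2 * half * (cey r * cxx s - cex r * cxy s))
    (c1 r * cye s + c1 s * cye r + half * cee r * cye s + half * cee s * cye r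
      + d2 * half * (cey s * cyx r - cex s * cyy r)
      + d2 * half * (cey r * cyx s - cex r * cyy s))
    (c1 r * cxx s + c1 s * cxx r + 4%:R^-1 * cee r * cxx s + 4%:R^-1 * cee s * cxx r
      + 4%:R^-1 * (cxe r * cex s - cxe s * cex r))
    (c1 r * cxy s + c1 s * cxy r + 4%:R^-1 * cee r * cxy s + 4%:R^-1 * cee s * cxy r
      + 4%:R^-1 * (cxe r * cey s - cxe s * cey r))
    (c1 r * cyx s + c1 s * cyx r + 4%:R^-1 * cee r * cyx s + 4%:R^-1 * cee s * cyx r
      + 4%:R^-1 * (cye r * cex s - cye s * cex r))
    (c1 r * cyy s + c1 s * cyy r + 4%:R^-1 * cee r * cyy s + 4%:R^-1 * cee s * cyy r
      + 4%:R^-1 * (cye r * cey s - cye s * cey r)).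

Definition cmul : coords -> coords -> coords := cmul_tw 1 1.

Record mat2 := Mat2 { m11 : F; m12 : F; m21 : F; m22 : F }.
Definition det2 (g : mat2) : F := m11 g * m22 g - m12 g * m21 g.
Definition adj2 (g : mat2) : mat2 := Mat2 (m22 g) (- m12 g) (- m21 g) (m11 g).
Definition mv1 (g : mat2) (v1 v2 : F) : F := m11 g * v1 + m12 g * v2.
Definition mv2 (g : mat2) (v1 v2 : F) : F := m21 g * v1 + m22 g * v2.

(* [g1] acts on the left and [g2] on the right tensor factor V. *)
Definition cact (g1 g2 : mat2) (r : coords) : coords :=
  let u11 := mv1 g2 (cxx r) (cxy r) in let u12 := mv2 g2 (cxx r) (cxy r) in
  let u21 := mv1 g2 (cyx r) (cyy r) in let u22 := mv2 g2 (cyx r) (cyy r) in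
  Coord (c1 r) (cee r) (mv1 g2 (cex r) (cey r)) (mv2 g2 (cex r) (cey r))
    (mv1 g1 (cxe r) (cye r)) (mv2 g1 (cxe r) (cye r))
    (mv1 g1 u11 u21) (mv1 g1 u12 u22) (mv2 g1 u11 u21) (mv2 g1 u12 u22).

End Coordinates.

Lemma four_nz (F : fieldType) : (2%:R : F) != 0 -> (4%:R : F) != 0.
Proof. by move=> h2; rewrite (_ : 4 = 2 * 2)%N // natrM mulf_neq0. Qed.
Lemma eight_nz (F : fieldType) : (2%:R : F) != 0 -> (8%:R : F) != 0.
Proof. by move=> h2; rewrite (_ : 8 = 2 * 4)%N // natrM mulf_neq0 ?four_nz. Qed.
Lemma sixteen_nz (F : fieldType) : (2%:R : F) != 0 -> (16%:R : F) != 0.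
Proof. by move=> h2; rewrite (_ : 16 = 4 * 4)%N // natrM mulf_neq0 ?four_nz. Qed.

Ltac field_nz :=
  field;
  try match goal with h2 : is_true (2%:R != 0) |- _ =>
    rewrite ?(four_nz h2) ?(eight_nz h2) ?(sixteen_nz h2) ?h2 end;
  try match goal with h3 : is_true (3%:R != 0) |- _ => rewrite ?h3 end;
  rewrite ?andbT ?andTb; repeat (apply/andP; split).

Section Product.
Variable F : fieldType.
Hypothesis two_nz : (2%:R : F) != 0.
Local Notation coords := (coords F).

Lemma k10mul_coords (r s : coords) :
  k10mul (of_coords r) (of_coords s) = of_coords (cmul r s).
Proof.
rewrite /k10mul /of_coords /=; congr pair.
  by rewrite !sum_ord3 !mxE /f3 /sgn /coords_entry /cmul /cmul_tw /= /half /symp; field_nz.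
apply/matrixP => i j; rewrite !mxE.
case: i => [[|[|[|i]]] Hi] //; case: j => [[|[|[|j]]] Hj] //;
rewrite !sum_ord3 !mxE /m3 /sgn /coords_entry /cmul /cmul_tw /= /half /symp; by field_nz.
Qed.

Lemma cmul_cact (g1 g2 : mat2 F) (r s : coords) :
  cmul (cact g1 g2 r) (cact g1 g2 s) = cact g1 g2 (cmul_tw (det2 g1) (det2 g2) r s).
Proof.
case: g1 => p1 q1 r1 s1; case: g2 => p2 q2 r2 s2.
by apply: coords_ext; rewrite /cact /cmul /cmul_tw /mv1 /mv2 /det2 /symp /=; field_nz.
Qed.

End Product.

Section Automorphisms.
Variable F : fieldType.
Local Notation coords := (coords F).

Record caut := CAut {
  caut_fun :> coords -> coords;
  caut_inv : coords -> coords;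
  caut_funK : cancel caut_fun caut_inv;
  caut_invK : cancel caut_inv caut_fun;
  caut_add r s : caut_fun (cadd r s) = cadd (caut_fun r) (caut_fun s);
  caut_scale c r : caut_fun (cscale c r) = cscale c (caut_fun r);
  caut_even r : caut_fun (ceven r) = ceven (caut_fun r);
  caut_mul r s : caut_fun (cmul r s) = cmul (caut_fun r) (caut_fun s) }.

Lemma caut_zero (f : caut) : f (czero F) = czero F.
Proof.
have -> : czero F = cscale 0 (czero F) by apply: coords_ext; rewrite /= mul0r.
by rewrite caut_scale; apply: coords_ext; rewrite /= !mul0r.
Qed.

Definition caut_id : caut.
Proof. by refine (@CAut id id _ _ _ _ _ _). Defined.

Definition caut_comp (f g : caut) : caut.
Proof.
refine (@CAut (f \o g) (caut_inv g \o caut_inv f) _ _ _ _ _ _).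
- by move=> r /=; rewrite !caut_funK.
- by move=> r /=; rewrite !caut_invK.
- by move=> r s /=; rewrite !caut_add.
- by move=> c r /=; rewrite !caut_scale.
- by move=> r /=; rewrite !caut_even.
- by move=> r s /=; rewrite !caut_mul.
Defined.

Definition caut_invert (f : caut) : caut.
Proof.
refine (@CAut (caut_inv f) f (caut_invK f) (caut_funK f) _ _ _ _);
  move=> *; apply: (can_inj (caut_funK f)).
- by rewrite caut_add !caut_invK.
- by rewrite caut_scale !caut_invK.
- by rewrite caut_even !caut_invK.
- by rewrite caut_mul !caut_invK.
Defined.

Definition caut_k10 (f : caut) (u : K10 F) : K10 F := of_coords (f (to_coords u)).

Lemma aut_image_caut_k10 (f : caut) (S : kset F) r :
  aut_image (caut_k10 f) S (of_coords r) <-> S (of_coords (caut_inv f r)).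
Proof.
split=> [[u hu /of_coords_inj ->]|hr]; first by rewrite caut_funK to_coordsK.
by exists (of_coords (caut_inv f r)); rewrite // /caut_k10 of_coordsK caut_invK.
Qed.

Hypothesis two_nz : (2%:R : F) != 0.

Lemma caut_k10_automorphism (f : caut) : is_automorphism (caut_k10 f).
Proof.
rewrite /caut_k10; split.
- by move=> u v; rewrite -(to_coordsK u) -(to_coordsK v) k10add_coords !of_coordsK
    caut_add k10add_coords.
- by move=> c u; rewrite -(to_coordsK u) k10scale_coords !of_coordsK caut_scale
    k10scale_coords.
- by exists (caut_k10 (caut_invert f)) => u; rewrite /caut_k10 /= of_coordsK
    ?caut_funK ?caut_invK to_coordsK.
- move=> u; rewrite /is_even -(to_coordsK u) k10even_coords !of_coordsK => /of_coords_inj e.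
  by rewrite k10even_coords -caut_even -e.
- move=> u; rewrite /is_odd -(to_coordsK u) k10even_coords of_coordsK k10zero_coords.
  by move=> /of_coords_inj e; rewrite k10even_coords -caut_even e caut_zero.
- by move=> u v; rewrite -(to_coordsK u) -(to_coordsK v) k10mul_coords // !of_coordsK
    caut_mul k10mul_coords.
Qed.

Definition caut_phi : caut.
Proof.
refine (@CAut (@cphi F) (@cphi F) _ _ _ _ _ _).
- by move=> r; apply: coords_ext; rewrite /= ?opprK.
- by move=> r; apply: coords_ext; rewrite /= ?opprK.
- by move=> r s; apply: coords_ext; rewrite /= ?opprD.
- by move=> c r; apply: coords_ext; rewrite /= ?mulrN.
- by move=> r; apply: coords_ext; rewrite /= ?oppr0.
- by move=> r s; apply: coords_ext; rewrite /cmul /cmul_tw /= /half /symp; field_nz.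
Defined.

Lemma det2_adj2 (g : mat2 F) : det2 (adj2 g) = det2 g.
Proof. by rewrite /det2 /=; ring. Qed.

Lemma adj2K : involutive (@adj2 F).
Proof. by case=> *; rewrite /adj2 /= !opprK. Qed.

Lemma cact_adj2 (g1 g2 : mat2 F) r : cact (adj2 g1) (adj2 g2) (cact g1 g2 r) =
  Coord (c1 r) (cee r) (det2 g2 * cex r) (det2 g2 * cey r)
    (det2 g1 * cxe r) (det2 g1 * cye r)
    (det2 g1 * det2 g2 * cxx r) (det2 g1 * det2 g2 * cxy r)
    (det2 g1 * det2 g2 * cyx r) (det2 g1 * det2 g2 * cyy r).
Proof. by apply: coords_ext; rewrite /cact /adj2 /mv1 /mv2 /det2 /=; ring. Qed.

Section SL2.
Variables g1 g2 : mat2 F.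
Hypotheses (det_g1 : det2 g1 = 1) (det_g2 : det2 g2 = 1).

Lemma cactK : cancel (cact g1 g2) (cact (adj2 g1) (adj2 g2)).
Proof. by case=> *; rewrite cact_adj2 det_g1 det_g2 !mul1r. Qed.

Lemma cact_adj2K : cancel (cact (adj2 g1) (adj2 g2)) (cact g1 g2).
Proof.
move=> r; have := cact_adj2 (adj2 g1) (adj2 g2) r.
by rewrite !adj2K !det2_adj2 det_g1 det_g2 !mul1r => ->; case: r.
Qed.

Definition caut_sl2 : caut.
Proof.
refine (@CAut (cact g1 g2) (cact (adj2 g1) (adj2 g2)) cactK cact_adj2K _ _ _ _).
- by move=> r s; apply: coords_ext; rewrite /cact /mv1 /mv2 /=; ring.
- by move=> c r; apply: coords_ext; rewrite /cact /mv1 /mv2 /=; ring.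
- by move=> r; apply: coords_ext; rewrite /cact /mv1 /mv2 /=; ring.
- by move=> r s; rewrite cmul_cact // det_g1 det_g2.
Defined.

End SL2.

End Automorphisms.

Section Subalgebras.
Variable F : fieldType.
Hypothesis two_nz : (2%:R : F) != 0.
Local Notation coords := (coords F).

Record csubalg (P : coords -> Prop) : Prop := {
  csub0 : P (czero F);
  csubD r s : P r -> P s -> P (cadd r s);
  csubZ c r : P r -> P (cscale c r);
  csubE r : P r -> P (ceven r);
  csubM r s : P r -> P s -> P (cmul r s) }.

Lemma eq_csubalg (P Q : coords -> Prop) :
  (forall r, P r <-> Q r) -> csubalg P -> csubalg Q.
Proof.
move=> PQ [s0 sD sZ sE sM]; split.
- exact/PQ.
- by move=> r s /PQ hr /PQ hs; apply/PQ/sD.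
- by move=> c r /PQ hr; apply/PQ/sZ.
- by move=> r /PQ hr; apply/PQ/sE.
- by move=> r s /PQ hr /PQ hs; apply/PQ/sM.
Qed.

Lemma csubalg_aut (f : caut F) (P : coords -> Prop) :
  csubalg P -> csubalg (fun r => P (f r)).
Proof.
case=> s0 sD sZ sE sM; split.
- by rewrite caut_zero.
- by move=> r s hr hs; rewrite caut_add; apply: sD.
- by move=> c r hr; rewrite caut_scale; apply: sZ.
- by move=> r hr; rewrite caut_even; apply: sE.
- by move=> r s hr hs; rewrite caut_mul; apply: sM.
Qed.

Lemma csubalg_fixed (f : caut F) : csubalg (fun r => f r = r).
Proof.
split.
- exact: caut_zero.
- by move=> r s hr hs; rewrite caut_add hr hs.
- by move=> c r hr; rewrite caut_scale hr.
- by move=> r hr; rewrite caut_even hr.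
- by move=> r s hr hs; rewrite caut_mul hr hs.
Qed.

Lemma is_subalgebra_coords (S : kset F) :
  is_subalgebra S <-> csubalg (fun r => S (of_coords r)).
Proof.
split=> -[s0 sD sZ sE sM]; split.
- by rewrite -k10zero_coords.
- by move=> r s hr hs; rewrite -k10add_coords; apply: sD.
- by move=> c r hr; rewrite -k10scale_coords; apply: sZ.
- by move=> r hr; rewrite -k10even_coords; apply: sE.
- by move=> r s hr hs; rewrite -k10mul_coords //; apply: sM.
- by rewrite k10zero_coords.
- by move=> u v; rewrite -(to_coordsK u) -(to_coordsK v) k10add_coords; apply: sD.
- by move=> c u; rewrite -(to_coordsK u) k10scale_coords; apply: sZ.
- by move=> u; rewrite -(to_coordsK u) k10even_coords; apply: sE.
- by move=> u v; rewrite -(to_coordsK u) -(to_coordsK v) k10mul_coords //; apply: sM.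
Qed.

Definition csub_i (r : coords) : Prop :=
  [/\ cex r = 0, cey r = 0, cxe r = 0 & cye r = 0].
Definition csub_ii (r : coords) : Prop := cphi r = r.
Definition csub_iii (r : coords) : Prop := [/\ cye r = 0, cyx r = 0 & cyy r = 0].
Definition csub_iv (r : coords) : Prop := [/\ cex r = 0, cye r = 0 & cyx r = 0].

Definition clisted (k : nat) : coords -> Prop :=
  match k with 0 => csub_i | 1 => csub_ii | 2 => csub_iii | _ => csub_iv end.

Lemma listed_coords (k : 'I_4) r : listed F k (of_coords r) <-> clisted k r.
Proof.
case: k => [[|[|[|[|k]]]] Hk] //=; rewrite /listed /=.
- rewrite /sub_i /is_even k10even_coords; split => [/of_coords_inj|].
    by case: r => ? ? ? ? ? ? ? ? ? ? [] /= *; subst.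
  by case: r => ? ? ? ? ? ? ? ? ? ? [] /= -> -> -> ->.
- by rewrite /sub_ii k10phi_coords; split => [/of_coords_inj|->].
- rewrite /sub_iii; split => [H|[e1 e2 e3] j].
    by split; [move: (H 0) | move: (H 1%:R) | move: (H 2%:R)]; rewrite mxE.
  by rewrite mxE; case: j => [[|[|[|j]]] Hj].
- by rewrite /sub_iv !mxE /=; split => -[e1 e2 e3].
Qed.

Ltac vanishing_closed :=
  split; intros; unfold csub_i, csub_iii, csub_iv in *;
  repeat match goal with
  | r : coords |- _ => destruct r
  | H : [/\ _, _, _ & _] |- _ => destruct H
  | H : [/\ _, _ & _] |- _ => destruct H
  end; simpl in *; subst; split; rewrite /cmul /cmul_tw /= /half; ring.

Lemma csubalg_listed k : csubalg (clisted k).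
Proof.
case: k => [|[|[|k]]] /=; [vanishing_closed | exact: (csubalg_fixed (caut_phi two_nz))
  | vanishing_closed | vanishing_closed].
Qed.

Lemma clisted_proper k : exists r, ~ clisted k r.
Proof.
case: k => [|[|[|k]]] /=.
- by exists (Coord 0 0 1 0 0 0 0 0 0 0); case=> /eqP; rewrite oner_eq0.
- exists (Coord 0 0 1 0 0 0 0 0 0 0) => /(congr1 (@cex F)) /= /eqP.
  by rewrite eq_sym oner_eq0.
- by exists (Coord 0 0 0 0 0 1 0 0 0 0); case=> /eqP; rewrite oner_eq0.
- by exists (Coord 0 0 1 0 0 0 0 0 0 0); case=> /eqP; rewrite oner_eq0.
Qed.

End Subalgebras.

Section OddPart.
Variable F : fieldType.
Local Notation coords := (coords F).

Definition codd (x1 x2 y1 y2 : F) : coords := Coord 0 0 x1 x2 y1 y2 0 0 0 0.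
Definition eV (v1 v2 : F) : coords := codd v1 v2 0 0.
Definition Ve (v1 v2 : F) : coords := codd 0 0 v1 v2.
Definition odd_part (r : coords) : coords := codd (cex r) (cey r) (cxe r) (cye r).
Definition nonzero2 (v1 v2 : F) : bool := (v1 != 0) || (v2 != 0).

Definition has_eV (P : coords -> Prop) : Prop := forall v1 v2, P (eV v1 v2).
Definition has_Ve (P : coords -> Prop) : Prop := forall v1 v2, P (Ve v1 v2).
Definition trivial_eV (P : coords -> Prop) : Prop :=
  forall v1 v2, P (eV v1 v2) -> v1 = 0 /\ v2 = 0.
Definition trivial_Ve (P : coords -> Prop) : Prop :=
  forall v1 v2, P (Ve v1 v2) -> v1 = 0 /\ v2 = 0.

Lemma nonzero2P (v1 v2 : F) : ~ nonzero2 v1 v2 -> v1 = 0 /\ v2 = 0.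
Proof. by rewrite /nonzero2; case: eqP => // ->; case: eqP. Qed.

Lemma nonzero2_10 : nonzero2 (1 : F) 0.
Proof. by rewrite /nonzero2 oner_eq0. Qed.

Lemma cact_codd (g1 g2 : mat2 F) x1 x2 y1 y2 : cact g1 g2 (codd x1 x2 y1 y2) =
  codd (mv1 g2 x1 x2) (mv2 g2 x1 x2) (mv1 g1 y1 y2) (mv2 g1 y1 y2).
Proof. by apply: coords_ext; rewrite /cact /mv1 /mv2 /=; ring. Qed.

Lemma cact_eV (g1 g2 : mat2 F) v1 v2 :
  cact g1 g2 (eV v1 v2) = eV (mv1 g2 v1 v2) (mv2 g2 v1 v2).
Proof. by rewrite cact_codd /mv1 /mv2 !mulr0 addr0. Qed.

Lemma cact_Ve (g1 g2 : mat2 F) v1 v2 :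
  cact g1 g2 (Ve v1 v2) = Ve (mv1 g1 v1 v2) (mv2 g1 v1 v2).
Proof. by rewrite cact_codd /mv1 /mv2 !mulr0 addr0. Qed.

Lemma cphi_codd x1 x2 y1 y2 : cphi (codd x1 x2 y1 y2) = codd y1 y2 x1 x2.
Proof. by apply: coords_ext; rewrite /= ?oppr0. Qed.

Lemma symp_mv (g : mat2 F) u1 u2 w1 w2 :
  symp (mv1 g u1 u2) (mv2 g u1 u2) (mv1 g w1 w2) (mv2 g w1 w2) =
  det2 g * symp u1 u2 w1 w2.
Proof. by rewrite /symp /mv1 /mv2 /det2; ring. Qed.

Lemma mv_eq0 (g : mat2 F) v1 v2 : det2 g = 1 ->
  mv1 g v1 v2 = 0 -> mv2 g v1 v2 = 0 -> v1 = 0 /\ v2 = 0.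
Proof.
move=> d e1 e2; rewrite -[v1]mul1r -[v2]mul1r -d.
have -> : det2 g * v1 = m22 g * mv1 g v1 v2 - m12 g * mv2 g v1 v2
  by rewrite /det2 /mv1 /mv2; ring.
have -> : det2 g * v2 = m11 g * mv2 g v1 v2 - m21 g * mv1 g v1 v2
  by rewrite /det2 /mv1 /mv2; ring.
by rewrite e1 e2 !mulr0 subr0.
Qed.

Definition sl2_col1 (q1 q2 : F) : mat2 F :=
  if q1 != 0 then Mat2 q1 0 q2 q1^-1 else Mat2 0 (- q2^-1) q2 0.
Definition sl2_col2 (v1 v2 : F) : mat2 F :=
  if v2 != 0 then Mat2 v2^-1 v1 0 v2 else Mat2 0 v1 (- v1^-1) 0.

Lemma det2_sl2_col1 q1 q2 : nonzero2 q1 q2 -> det2 (sl2_col1 q1 q2) = 1.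
Proof.
by rewrite /sl2_col1 /nonzero2 /det2; case: (eqVneq q1 0) => [-> /= hq|hq _] /=; field.
Qed.

Lemma det2_sl2_col2 v1 v2 : nonzero2 v1 v2 -> det2 (sl2_col2 v1 v2) = 1.
Proof.
rewrite /sl2_col2 /nonzero2 /det2; case: (eqVneq v2 0) => [-> /=|hv _] /=.
  by rewrite orbF => hv; field.
by field.
Qed.

Lemma mv1_sl2_col1 q1 q2 : mv1 (sl2_col1 q1 q2) 1 0 = q1.
Proof. by rewrite /sl2_col1 /mv1; case: eqP => [->|_]; rewrite /= mulr1 mulr0 addr0. Qed.

Lemma mv2_sl2_col1 q1 q2 : mv2 (sl2_col1 q1 q2) 1 0 = q2.
Proof. by rewrite /sl2_col1 /mv2; case: eqP => [->|_]; rewrite /= mulr1 mulr0 addr0. Qed.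

Lemma mv1_sl2_col2 v1 v2 : mv1 (sl2_col2 v1 v2) 0 1 = v1.
Proof. by rewrite /sl2_col2 /mv1; case: eqP => [->|_]; rewrite /= mulr1 mulr0 add0r. Qed.

Lemma mv2_sl2_col2 v1 v2 : mv2 (sl2_col2 v1 v2) 0 1 = v2.
Proof. by rewrite /sl2_col2 /mv2; case: eqP => [->|_]; rewrite /= mulr1 mulr0 add0r. Qed.

Lemma symp_sl2_col1 q1 q2 w1 w2 : nonzero2 q1 q2 ->
  symp q1 q2 (mv1 (sl2_col1 q1 q2) w1 w2) (mv2 (sl2_col1 q1 q2) w1 w2) = w2.
Proof.
move=> nq; have := symp_mv (sl2_col1 q1 q2) 1 0 w1 w2.
by rewrite mv1_sl2_col1 mv2_sl2_col1 det2_sl2_col1 // => ->; rewrite /symp; ring.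
Qed.

Definition id2 : mat2 F := Mat2 1 0 0 1.

Lemma det2_id2 : det2 id2 = 1.
Proof. by rewrite /det2 /= mulr1 mulr0 subr0. Qed.

Lemma mv1_id2 v1 v2 : mv1 id2 v1 v2 = v1.
Proof. by rewrite /mv1 /= mul1r mul0r addr0. Qed.

Lemma mv2_id2 v1 v2 : mv2 id2 v1 v2 = v2.
Proof. by rewrite /mv2 /= mul1r mul0r add0r. Qed.

End OddPart.

Ltac coords_field :=
  apply: coords_ext; rewrite /cmul /cmul_tw /= /half /symp; field_nz.

Section Classification.
Variable F : fieldType.
Hypotheses (two_nz : (2%:R : F) != 0) (three_nz : (3%:R : F) != 0).
Local Notation coords := (coords F).

Section FixedSubalgebra.
Variable P : coords -> Prop.
Hypothesis sP : csubalg P.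

Lemma csub_lin c d r s : P r -> P s -> P (cadd (cscale c r) (cscale d s)).
Proof. by move=> hr hs; apply: (csubD sP); apply: (csubZ sP). Qed.

Lemma csub_odd r : P r -> P (odd_part r).
Proof.
move=> hr; have := csub_lin 1 (-1) hr (csubE sP hr).
by congr P; apply: coords_ext; rewrite /=; ring.
Qed.

Lemma eV_span u1 u2 w1 w2 : P (eV u1 u2) -> P (eV w1 w2) -> symp u1 u2 w1 w2 != 0 ->
  has_eV P.
Proof.
move=> hu hw hs v1 v2.
have := csub_lin (symp v1 v2 w1 w2 / symp u1 u2 w1 w2)
  (symp u1 u2 v1 v2 / symp u1 u2 w1 w2) hu hw.
by congr P; move: hs; rewrite /symp => hs; apply: coords_ext; rewrite /= ?mulr0 ?addr0 //;
  field.
Qed.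

Lemma Ve_span u1 u2 w1 w2 : P (Ve u1 u2) -> P (Ve w1 w2) -> symp u1 u2 w1 w2 != 0 ->
  has_Ve P.
Proof.
move=> hu hw hs v1 v2.
have := csub_lin (symp v1 v2 w1 w2 / symp u1 u2 w1 w2)
  (symp u1 u2 v1 v2 / symp u1 u2 w1 w2) hu hw.
by congr P; move: hs; rewrite /symp => hs; apply: coords_ext; rewrite /= ?mulr0 ?addr0 //;
  field.
Qed.

Lemma csub_full : has_eV P -> has_Ve P -> forall r, P r.
Proof.
move=> heV hVe.
have hVV t11 t12 t21 t22 : P (Coord 0 0 0 0 0 0 t11 t12 t21 t22).
  have := csub_lin (- 4%:R) (- 4%:R) (csubM sP (heV t11 t12) (hVe 1 0))
    (csubM sP (heV t21 t22) (hVe 0 1)).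
  by congr P; coords_field.
have hscal l m : P (Coord l m 0 0 0 0 0 0 0 0).
  have := csub_lin (8%:R / 3%:R * l + 2%:R * m) (8%:R / 3%:R * l + m)
    (csubM sP (heV 1 0) (heV 0 1)) (csubM sP (hVV 1 0 0 0) (hVV 0 0 0 1)).
  by congr P; coords_field.
move=> r; have -> : r = cadd (cadd (Coord (c1 r) (cee r) 0 0 0 0 0 0 0 0)
    (Coord 0 0 0 0 0 0 (cxx r) (cxy r) (cyx r) (cyy r)))
    (cadd (eV (cex r) (cey r)) (Ve (cxe r) (cye r))).
  by case: r => *; apply: coords_ext; rewrite /= ?addr0 ?add0r.
by do !apply: (csubD sP).
Qed.

Lemma csub_Ve_part :
  P (eV 1 0) -> P (eV 0 1) -> forall r, P r -> P (Ve (cxe r) (cye r)).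
Proof.
move=> hx hy r hr.
have := csub_lin (- 8%:R) (cey r) (csubM sP (csubM sP hx (csub_odd hr)) hy) hy.
by congr P; coords_field.
Qed.

Lemma csub_in_iii : P (eV 1 0) -> P (eV 0 1) -> (forall r, P r -> cye r = 0) ->
  forall r, P r -> csub_iii r.
Proof.
move=> hx hy hye r hr; split; first exact: hye.
  have -> : cyx r = 2%:R * cye (cmul (ceven r) (eV 0 1))
    by rewrite /cmul /cmul_tw /= /half; field_nz.
  by rewrite hye ?mulr0 //; apply: (csubM sP) => //; apply: (csubE sP).
have -> : cyy r = - 2%:R * cye (cmul (ceven r) (eV 1 0))
  by rewrite /cmul /cmul_tw /= /half; field_nz.
by rewrite hye ?mulr0 //; apply: (csubM sP) => //; apply: (csubE sP).
Qed.

Lemma csub_in_iv_of d : P (codd 0 1 d 0) -> (forall r, P r -> cex r = 0) ->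
  (forall r, P r -> cye r = 0) -> forall r, P r -> csub_iv r.
Proof.
move=> hw hex hye r hr; split; [exact: hex | exact: hye |].
have -> : cyx r = 2%:R * cye (cmul (ceven r) (codd 0 1 d 0))
  by rewrite /cmul /cmul_tw /= /half; field_nz.
by rewrite hye ?mulr0 //; apply: (csubM sP) => //; apply: (csubE sP).
Qed.

Lemma cex_vanish : P (eV 0 1) -> ~ has_eV P -> forall r, P r -> cex r = 0.
Proof.
move=> hy neV r hr; apply/eqP/negP => /negP hc; apply: neV.
have hQ : P (eV (cex r * cex r) (cex r * cey r)).
  have := csubZ sP (- 8%:R) (csubM sP (csubM sP hy (csub_odd hr)) (csub_odd hr)).
  by congr P; coords_field.
by apply: (eV_span hy hQ); rewrite /symp mul0r sub0r mul1r oppr_eq0 mulf_neq0.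
Qed.

Lemma csub_in_iv : P (eV 0 1) -> ~ has_eV P ->
  (forall v1 v2, P (Ve v1 v2) -> v2 = 0) -> forall r, P r -> csub_iv r.
Proof.
move=> hy neV hVe; have hex := cex_vanish hy neV.
apply: (csub_in_iv_of (d := 0)) => // r hr; apply: (hVe (cxe r)).
have := csub_lin 1 (- cey r) (csub_odd hr) hy.
by congr P; apply: coords_ext; rewrite /= ?(hex _ hr); ring.
Qed.

Lemma csub_in_ii : P (codd 1 0 1 0) -> P (codd 0 1 0 1) -> trivial_Ve P ->
  forall r, P r -> csub_ii r.
Proof.
move=> hx hy hVe.
have diag r : P r -> cex r = cxe r /\ cey r = cye r.
  move=> hr; have := csubD sP (csub_odd hr) (csub_lin (- cex r) (- cey r) hx hy).
  have -> : cadd (odd_part r) (cadd (cscale (- cex r) (codd 1 0 1 0))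
      (cscale (- cey r) (codd 0 1 0 1))) = Ve (cxe r - cex r) (cye r - cey r).
    by apply: coords_ext; rewrite /=; ring.
  by case/hVe => /eqP; rewrite subr_eq0 => /eqP -> /eqP; rewrite subr_eq0 => /eqP ->.
move=> r hr; have [e1 e2] := diag r hr.
pose m1 := cmul (ceven r) (codd 1 0 1 0); pose m2 := cmul (ceven r) (codd 0 1 0 1).
have [f1 f2] := diag m1 (csubM sP (csubE sP hr) hx).
have [g1 _] := diag m2 (csubM sP (csubE sP hr) hy).
have txx : cxx r = 0.
  have -> : cxx r = cxe m2 - cex m2 by rewrite /m2 /cmul /cmul_tw /= /half; field_nz.
  by rewrite g1 subrr.
have tyy : cyy r = 0.
  have -> : cyy r = cey m1 - cye m1 by rewrite /m1 /cmul /cmul_tw /= /half; field_nz.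
  by rewrite f2 subrr.
have txy : cxy r = - cyx r.
  apply/eqP; rewrite -subr_eq0 opprK.
  have -> : cxy r + cyx r = 2%:R * (cex m1 - cxe m1)
    by rewrite /m1 /cmul /cmul_tw /= /half; field_nz.
  by rewrite f1 subrr mulr0.
by apply: coords_ext; rewrite /= ?e1 ?e2 ?txx ?tyy ?txy ?opprK ?oppr0.
Qed.

Lemma Ve_line q1 q2 : ~ has_Ve P -> P (Ve q1 q2) ->
  forall w1 w2, P (Ve w1 w2) -> symp q1 q2 w1 w2 = 0.
Proof.
move=> nVe hq w1 w2 hw; apply/eqP/negP => /negP hs; apply: nVe; exact: Ve_span hq hw hs.
Qed.

Lemma Ve_line_exists : ~ has_Ve P -> exists q1 q2, nonzero2 q1 q2 /\
  forall w1 w2, P (Ve w1 w2) -> symp q1 q2 w1 w2 = 0.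
Proof.
move=> nVe; case: (classic (exists q1 q2, nonzero2 q1 q2 /\ P (Ve q1 q2))).
  by case=> q1 [q2 [nq hq]]; exists q1, q2; split => //; apply: Ve_line.
move=> noVe; exists 1, 0; split; first exact: nonzero2_10.
move=> w1 w2 hw; have [-> ->] : w1 = 0 /\ w2 = 0.
  by apply: nonzero2P => nw; apply: noVe; exists w1, w2.
by rewrite /symp mul0r mulr0 subr0.
Qed.

Lemma has_eV_cact (g1 g2 : mat2 F) : det2 g2 = 1 ->
  has_eV (fun r => P (cact g1 g2 r)) -> has_eV P.
Proof.
move=> d2 heV; have := heV 1 0; have := heV 0 1; rewrite !cact_eV => hy hx.
by apply: (eV_span hx hy); rewrite symp_mv d2 /symp !mul1r mul0r subr0 oner_eq0.
Qed.

Lemma trivial_Ve_cact (g1 g2 : mat2 F) : det2 g1 = 1 ->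
  trivial_Ve P -> trivial_Ve (fun r => P (cact g1 g2 r)).
Proof.
by move=> d1 hVe v1 v2; rewrite cact_Ve => /hVe [e1 e2]; exact: mv_eq0 d1 e1 e2.
Qed.

End FixedSubalgebra.

Implicit Types P : coords -> Prop.

Definition conj_in_listed P : Prop :=
  exists (f : caut F) (k : 'I_4), forall r, P r -> clisted k (caut_inv f r).

Lemma conj_in_listed_by (f : caut F) (k : nat) P : (k < 4)%N ->
  (forall r, P (f r) -> clisted k r) -> conj_in_listed P.
Proof. by move=> lk H; exists f, (Ordinal lk) => r hr; apply: H; rewrite caut_invK. Qed.

Lemma conj_in_listed_aut (f : caut F) P :
  conj_in_listed (fun r => P (f r)) -> conj_in_listed P.
Proof.
by case=> g [k H]; exists (caut_comp f g), k => r hr; apply: H; rewrite caut_invK.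
Qed.

Lemma conj_in_listed_phi P :
  conj_in_listed (fun r => P (cphi r)) -> conj_in_listed P.
Proof. exact: (@conj_in_listed_aut (caut_phi two_nz)). Qed.

Lemma has_eV_phi P : has_eV (fun r => P (cphi r)) <-> has_Ve P.
Proof. by split=> H v1 v2; move: (H v1 v2); rewrite cphi_codd. Qed.

Lemma has_Ve_phi P : has_Ve (fun r => P (cphi r)) <-> has_eV P.
Proof. by split=> H v1 v2; move: (H v1 v2); rewrite cphi_codd. Qed.

Lemma conj_in_iii P : csubalg P -> has_eV P -> ~ has_Ve P -> conj_in_listed P.
Proof.
move=> sP heV nVe; have [q1 [q2 [nq line]]] := Ve_line_exists sP nVe.
pose f := caut_sl2 two_nz (det2_sl2_col1 nq) (det2_id2 F).
apply: (@conj_in_listed_by f 2) => //.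
have sP' := csubalg_aut f sP.
have heV' : has_eV (fun r => P (f r)).
  by move=> v1 v2 /=; rewrite cact_eV mv1_id2 mv2_id2; apply: heV.
apply: (csub_in_iii sP' (heV' 1 0) (heV' 0 1)) => r hr.
have := csub_Ve_part sP' (heV' 1 0) (heV' 0 1) hr.
by rewrite /= cact_Ve => /line; rewrite symp_sl2_col1.
Qed.

Lemma conj_in_iv P v1 v2 : csubalg P -> ~ has_eV P -> ~ has_Ve P ->
  nonzero2 v1 v2 -> P (eV v1 v2) -> conj_in_listed P.
Proof.
move=> sP neV nVe nv hv; have [q1 [q2 [nq line]]] := Ve_line_exists sP nVe.
have d2 := det2_sl2_col2 nv.
pose f := caut_sl2 two_nz (det2_sl2_col1 nq) d2.
apply: (@conj_in_listed_by f 3) => //.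
apply: (csub_in_iv (csubalg_aut f sP)).
- by rewrite /= cact_eV mv1_sl2_col2 mv2_sl2_col2.
- by move/(has_eV_cact sP d2).
- by move=> w1 w2; rewrite /= cact_Ve => /line; rewrite symp_sl2_col1.
Qed.

Lemma graph_slope P t s : csubalg P -> trivial_Ve P ->
  P (codd 0 1 1 0) -> P (codd 1 0 t s) -> s = -1.
Proof.
move=> sP hVe hw hz.
have := csub_lin sP (- 8%:R) (-1) (csubM sP (csubM sP hw hz) hw) hw.
have -> : cadd (cscale (- 8%:R) (cmul (cmul (codd 0 1 1 0) (codd 1 0 t s)) (codd 0 1 1 0)))
  (cscale (-1) (codd 0 1 1 0)) = Ve (- (s + 1)) 0 by coords_field.
by case/hVe => /eqP; rewrite oppr_eq0 addr_eq0 => /eqP.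
Qed.

Lemma conj_in_ii P t : csubalg P -> trivial_Ve P ->
  P (codd 0 1 1 0) -> P (codd 1 0 t (-1)) -> conj_in_listed P.
Proof.
move=> sP hVe hw hz.
have dA : det2 (Mat2 t 1 (-1) 0) = 1 by rewrite /det2 /=; ring.
pose f := caut_sl2 two_nz dA (det2_id2 F).
apply: (@conj_in_listed_by f 1) => //.
apply: (csub_in_ii (csubalg_aut f sP)); last exact: trivial_Ve_cact.
- by move: hz; congr P; apply: coords_ext; rewrite /= /mv1 /mv2 /=; ring.
- by move: hw; congr P; apply: coords_ext; rewrite /= /mv1 /mv2 /=; ring.
Qed.

Lemma conj_in_listed_graph P : csubalg P -> trivial_Ve P ->
  P (codd 0 1 1 0) -> conj_in_listed P.
Proof.
move=> sP hVe hw.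
case: (classic (forall r, P r -> cex r = 0 /\ cye r = 0)) => [H|].
  apply: (@conj_in_listed_by (caut_id F) 3) => //.
  exact: (csub_in_iv_of sP hw (fun r hr => (H r hr).1) (fun r hr => (H r hr).2)).
move=> /not_all_ex_not [r /(imply_to_and (P r)) [hr hne]].
have hu : P (codd (cex r) 0 (cxe r - cey r) (cye r)).
  have := csub_lin sP 1 (- cey r) (csub_odd sP hr) hw.
  by congr P; apply: coords_ext; rewrite /=; ring.
have hc : cex r != 0.
  by apply/eqP => e; apply: hne; split => //; move: hu; rewrite e => /hVe [].
have hz := csubZ sP (cex r)^-1 hu.
have hs : cye r / cex r = -1.
  apply: (graph_slope sP hVe hw (t := (cxe r - cey r) / cex r)).
  by move: hz; congr P; apply: coords_ext; rewrite /= ?mulr0 //; field.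
apply: (conj_in_ii (t := (cxe r - cey r) / cex r) sP hVe hw).
by rewrite -hs; move: hz; congr P; apply: coords_ext; rewrite /= ?mulr0 //; field.
Qed.

Lemma conj_in_listed_odd_trivial P r0 : csubalg P -> trivial_eV P -> trivial_Ve P ->
  P r0 -> nonzero2 (cex r0) (cey r0) \/ nonzero2 (cxe r0) (cye r0) ->
  conj_in_listed P.
Proof.
move=> sP heV hVe hr0 hn; have ho := csub_odd sP hr0.
have na : nonzero2 (cex r0) (cey r0).
  apply/negP => /nonzero2P [e1 e2]; move: ho hn; rewrite /odd_part e1 e2 => /hVe [-> ->].
  by rewrite /nonzero2 eqxx; case.
have nb : nonzero2 (cxe r0) (cye r0).
  apply/negP => /nonzero2P [e1 e2]; move: ho na; rewrite /odd_part e1 e2 => /heV [-> ->].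
  by rewrite /nonzero2 eqxx.
have d1 := det2_sl2_col1 nb.
pose f := caut_sl2 two_nz d1 (det2_sl2_col2 na).
apply: (conj_in_listed_aut (f := f)).
apply: conj_in_listed_graph; [exact: csubalg_aut | exact: trivial_Ve_cact |].
by rewrite /= cact_codd mv1_sl2_col1 mv2_sl2_col1 mv1_sl2_col2 mv2_sl2_col2.
Qed.

Lemma csubalg_conj_in_listed P : csubalg P -> (exists r, ~ P r) -> conj_in_listed P.
Proof.
move=> sP [r0 nr0].
have nfull : ~ (has_eV P /\ has_Ve P).
  by case=> heV hVe; apply: nr0; exact: (csub_full sP heV hVe r0).
have sPphi := csubalg_aut (caut_phi two_nz) sP.
case: (classic (has_eV P)) => [heV|neV].
  by apply: conj_in_iii => // hVe; apply: nfull.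
case: (classic (has_Ve P)) => [hVe|nVe].
  by apply/conj_in_listed_phi/conj_in_iii => //; [apply/has_eV_phi | move/has_Ve_phi].
case: (classic (exists v1 v2, nonzero2 v1 v2 /\ P (eV v1 v2))) => [[v1 [v2 [nv hv]]]|noeV].
  exact: conj_in_iv nv hv.
case: (classic (exists v1 v2, nonzero2 v1 v2 /\ P (Ve v1 v2))) => [[v1 [v2 [nv hv]]]|noVe].
  apply/conj_in_listed_phi/(conj_in_iv sPphi _ _ nv); first by move/has_eV_phi.
    by move/has_Ve_phi.
  by rewrite /= cphi_codd.
case: (classic (exists r, P r /\ ~ csub_i r)) => [[r [hr nr]]|]; last first.
  move=> noodd; apply: (@conj_in_listed_by (caut_id F) 0) => // r hr.
  by apply: NNPP => nr; apply: noodd; exists r.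
apply: (conj_in_listed_odd_trivial sP _ _ hr).
- by move=> v1 v2 hv; apply: nonzero2P => nv; apply: noeV; exists v1, v2.
- by move=> v1 v2 hv; apply: nonzero2P => nv; apply: noVe; exists v1, v2.
case: (boolP (nonzero2 (cex r) (cey r))) => [|/negP/nonzero2P [e1 e2]]; first by left.
case: (boolP (nonzero2 (cxe r) (cye r))) => [|/negP/nonzero2P [e3 e4]]; first by right.
by case: nr; split.
Qed.

Definition cmaximal (L : coords -> Prop) : Prop :=
  forall P : coords -> Prop, csubalg P ->
    (forall r, L r -> P r) -> (forall r, P r -> L r) \/ (forall r, P r).

Section ContainsEven.
Variable P : coords -> Prop.
Hypotheses (sP : csubalg P) (hEven : forall r, csub_i r -> P r).

Let hVV t11 t12 t21 t22 : P (Coord 0 0 0 0 0 0 t11 t12 t21 t22).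
Proof. by apply: hEven. Qed.

Lemma has_Ve_of_even v1 v2 : nonzero2 v1 v2 -> P (eV v1 v2) -> has_Ve P.
Proof.
move=> nv hv w1 w2; case: (eqVneq v1 0) => [e|hv1].
  have hv2 : v2 != 0 by move: nv; rewrite /nonzero2 e eqxx.
  have := csubM sP (hVV (2%:R * w1 / v2) 0 (2%:R * w2 / v2) 0) hv.
  by rewrite e; congr P; coords_field.
have := csubM sP (hVV 0 (- 2%:R * w1 / v1) 0 (- 2%:R * w2 / v1)) hv.
by congr P; coords_field.
Qed.

Lemma has_eV_of_even v1 v2 : nonzero2 v1 v2 -> P (Ve v1 v2) -> has_eV P.
Proof.
move=> nv hv w1 w2; case: (eqVneq v2 0) => [e|hv2].
  have hv1 : v1 != 0 by move: nv; rewrite /nonzero2 e eqxx orbF.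
  have := csubM sP (hVV 0 0 (2%:R * w1 / v1) (2%:R * w2 / v1)) hv.
  by rewrite e; congr P; coords_field.
have := csubM sP (hVV (- 2%:R * w1 / v2) (- 2%:R * w2 / v2) 0 0) hv.
by congr P; coords_field.
Qed.

Lemma eV_of_even r : P r -> nonzero2 (cex r) (cey r) -> P (eV (cex r) (cey r)).
Proof.
move=> hr na; have ho := csub_odd sP hr.
case: (boolP (nonzero2 (cxe r) (cye r))) => [nb|/negP/nonzero2P [e1 e2]]; last first.
  by move: ho; rewrite /odd_part e1 e2.
case: (eqVneq (cye r) 0) => [e|hb2].
  have hb1 : cxe r != 0 by move: nb; rewrite /nonzero2 e eqxx orbF.
  have := csubZ sP (2%:R / cxe r) (csubM sP (hVV 0 0 (cex r) (cey r)) ho).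
  by congr P; apply: coords_ext; rewrite /cmul /cmul_tw /= /half /symp ?e; field_nz.
have := csubZ sP (- 2%:R / cye r) (csubM sP (hVV (cex r) (cey r) 0 0) ho).
by congr P; coords_field.
Qed.

End ContainsEven.

Lemma csub_i_maximal : cmaximal (@csub_i F).
Proof.
move=> P sP hEven.
case: (classic (exists r, P r /\ ~ csub_i r)) => [[r [hr nr]]|]; last first.
  by move=> noodd; left => r hr; apply: NNPP => nr; apply: noodd; exists r.
right; case: (boolP (nonzero2 (cex r) (cey r))) => [na|/negP/nonzero2P [e1 e2]].
  have hVe := has_Ve_of_even sP hEven na (eV_of_even sP hEven hr na).
  exact: (csub_full sP (has_eV_of_even sP hEven (nonzero2_10 F) (hVe 1 0)) hVe).
have nb : nonzero2 (cxe r) (cye r).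
  by apply/negP => /nonzero2P [e3 e4]; apply: nr; split.
have := csub_odd sP hr; rewrite /odd_part e1 e2 => hb.
have heV := has_eV_of_even sP hEven nb hb.
exact: (csub_full sP heV (has_Ve_of_even sP hEven (nonzero2_10 F) (heV 1 0))).
Qed.

Lemma csub_ii_maximal : cmaximal (@csub_ii F).
Proof.
move=> P sP hL.
have hdiag v1 v2 : P (codd v1 v2 v1 v2) by apply: hL; rewrite /csub_ii cphi_codd.
case: (classic (exists q1 q2, nonzero2 q1 q2 /\ P (Ve q1 q2))) => [[q1 [q2 [nq hq]]]|noVe];
  last first.
  left; apply: (csub_in_ii sP (hdiag 1 0) (hdiag 0 1)) => v1 v2 hv.
  by apply: nonzero2P => nv; apply: noVe; exists v1, v2.
right.
have hVV p1 p2 : P (Coord 0 0 0 0 0 0 (q1 * p1) (q1 * p2) (q2 * p1) (q2 * p2)).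
  have hs : P (Coord (- (3%:R / 8%:R) * symp q1 q2 p1 p2) (symp q1 q2 p1 p2)
      0 0 0 0 0 0 0 0).
    by apply: hL; apply: coords_ext; rewrite /= ?oppr0.
  have := csub_lin sP 4%:R (- 4%:R) (csubM sP hq (hdiag p1 p2)) hs.
  by congr P; coords_field.
have heV : has_eV P.
  move=> p1 p2; case: (eqVneq q2 0) => [e|hq2].
    have hq1 : q1 != 0 by move: nq; rewrite /nonzero2 e eqxx orbF.
    have := csub_lin sP (- 2%:R / q1) (p1 / q1) (csubM sP (hVV p1 p2) (hdiag 0 1)) hq.
    by rewrite e; congr P; coords_field.
  have := csub_lin sP (2%:R / q2) (p2 / q2) (csubM sP (hVV p1 p2) (hdiag 1 0)) hq.
  by congr P; coords_field.
apply: (csub_full sP heV) => v1 v2; have := csub_lin sP 1 (-1) (hdiag v1 v2) (heV v1 v2).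
by congr P; apply: coords_ext; rewrite /=; ring.
Qed.

Lemma csub_iii_maximal : cmaximal (@csub_iii F).
Proof.
move=> P sP hL.
have heV : has_eV P by move=> v1 v2; apply: hL.
have hx : P (Ve 1 0) by apply: hL.
case: (classic (has_Ve P)) => [hVe|nVe]; first by right; exact: (csub_full sP heV hVe).
left.
apply: (csub_in_iii sP (heV 1 0) (heV 0 1)) => r hr.
have := Ve_line sP nVe hx (csub_Ve_part sP (heV 1 0) (heV 0 1) hr).
by rewrite /symp mul1r mul0r subr0.
Qed.

Lemma csub_iv_maximal : cmaximal (@csub_iv F).
Proof.
move=> P sP hL.
have hy : P (eV 0 1) by apply: hL.
have hx : P (Ve 1 0) by apply: hL.
have hyy : P (Coord 0 0 0 0 0 0 0 0 0 1) by apply: hL.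
have hxx : P (Coord 0 0 0 0 0 0 1 0 0 0) by apply: hL.
have symp_nz : symp (1 : F) 0 0 1 != 0 by rewrite /symp mul1r mul0r subr0 oner_eq0.
have heV_Ve : has_eV P -> has_Ve P.
  move=> heV; apply: (Ve_span sP hx _ symp_nz).
  have := csubZ sP (- 2%:R) (csubM sP hyy (heV 1 0)).
  by congr P; coords_field.
have hVe_eV : has_Ve P -> has_eV P.
  move=> hVe; apply: (eV_span sP _ hy symp_nz).
  have := csubZ sP (- 2%:R) (csubM sP hxx (hVe 0 1)).
  by congr P; coords_field.
case: (classic (has_eV P)) => [heV|neV].
  by right; exact: (csub_full sP heV (heV_Ve heV)).
case: (classic (has_Ve P)) => [hVe|nVe].
  by right; exact: (csub_full sP (hVe_eV hVe) hVe).
left; apply: (csub_in_iv sP hy neV) => w1 w2 hw.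
by have := Ve_line sP nVe hx hw; rewrite /symp mul1r mul0r subr0.
Qed.

Lemma clisted_maximal k : cmaximal (clisted k).
Proof.
case: k => [|[|[|k]]] /=; [exact: csub_i_maximal | exact: csub_ii_maximal
  | exact: csub_iii_maximal | exact: csub_iv_maximal].
Qed.

Lemma listed_maximal (k : 'I_4) : is_maximal_subalgebra (listed F k).
Proof.
split.
- apply/(is_subalgebra_coords two_nz)/(eq_csubalg _ (csubalg_listed two_nz k)) => r.
  by rewrite listed_coords.
- by have [r hr] := clisted_proper F k; exists (of_coords r); rewrite listed_coords.
move=> T /(is_subalgebra_coords two_nz) sT hT.
have [LT|Tall] := clisted_maximal sT (fun r hr => hT _ (iffRL (listed_coords k r) hr)).
  by left=> u; rewrite -(to_coordsK u) listed_coords => /LT.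
by right=> u; rewrite -(to_coordsK u); apply: Tall.
Qed.

Lemma maximal_conj_listed (S : kset F) : is_maximal_subalgebra S ->
  exists g : K10 F -> K10 F, is_automorphism g /\
    exists k : 'I_4, same_set S (aut_image g (listed F k)).
Proof.
case=> /(is_subalgebra_coords two_nz) sS [u0 hu0] hmax.
have [f [k SL]] : conj_in_listed (fun r => S (of_coords r)).
  by apply: csubalg_conj_in_listed sS _; exists (to_coords u0); rewrite to_coordsK.
exists (caut_k10 f); split; first exact: (caut_k10_automorphism two_nz f).
exists k; set T := aut_image (caut_k10 f) (listed F k).
have TE r : T (of_coords r) <-> clisted k (caut_inv f r).
  by rewrite /T aut_image_caut_k10 listed_coords.
have ST u : S u -> T u by rewrite -(to_coordsK u) TE => /SL.
have sT : is_subalgebra T.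
  apply/(is_subalgebra_coords two_nz).
  apply: eq_csubalg (csubalg_aut (caut_invert f) (csubalg_listed two_nz k)) => r.
  by rewrite TE.
have [TS|Tall] := hmax T sT ST; first by move=> u; split; [apply: ST | apply: TS].
have [r nr] := clisted_proper F k.
by case: nr; have /TE := Tall (of_coords (f r)); rewrite caut_funK.
Qed.

End Classification.

Theorem corollary4p2 (F : closedFieldType)
  (char2 : (2 \notin [pchar F])%N) (char3 : (3 \notin [pchar F])%N) :
  (forall k : 'I_4, is_maximal_subalgebra (listed F k)) /\
  (forall S : kset F, is_maximal_subalgebra S ->
     exists g : K10 F -> K10 F, is_automorphism g /\
       exists k : 'I_4, same_set S (aut_image g (listed F k))).
Proof.
have two_nz : (2%:R : F) != 0 by apply: contra char2 => /eqP two0; rewrite inE /= two0.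
have three_nz : (3%:R : F) != 0 by apply: contra char3 => /eqP three0; rewrite inE /= three0.
by split; [apply: listed_maximal | apply: maximal_conj_listed].
Qed.
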